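(* Let $\mathcal H$ be a complex Hilbert space and $\mathbf T=(T_1,\dots,T_n)\in B(\mathcal H)^n$ a doubly commuting $n$-tuple such that each $T_j$ has Property (1) (see context). If $z=(z_1,\dots,z_n)\in\sigma_T(\mathbf T)$, then there exist unit vectors $y_m\in\mathcal H$ such that $(T_j-z_j)^*y_m\to0$ as $m\to\infty$ for all $j=1,\dots,n$; that is, $\overline z=(\overline{z_1},\dots,\overline{z_n})$ belongs to the joint approximate point spectrum of $\mathbf T^*=(T_1^*,\dots,T_n^* )$.
   Context: Doubly commuting: $T_iT_j=T_jT_i$ and $T_i^*T_j=T_jT_i^*$ for $i\ne j$. Property (1) for an operator $T$: for every $z\in\mathbb C$ and every sequence $\{x_m\}$ of unit vectors, $(T-z)x_m\to0$ implies $(T-z)^*x_m\to0$. $\sigma_T$ denotes the Taylor spectrum: $z\in\sigma_T(\mathbf T)$ iff the Koszul complex of $(T_1-z_1,\dots,T_n-z_n)$ is not exact, where for a commuting tuple $\mathbf A$ the Koszul complex is $0\to E^n_n(\mathcal H)\xrightarrow{D_n}\cdots\xrightarrow{D_1}E^n_0(\mathcal H)\to0$ with $E^n_k(\mathcal H)=\mathcal H\otimes E^n_k$ ($E^n$ the exterior algebra on $e_1,\dots,e_n$) and $D_k(x\otimes e_{j_1}\wedge\cdots\wedge e_{j_k})=\sum_{i=1}^k(-1)^{i-1}A_{j_i}x\otimes e_{j_1}\wedge\cdots\wedge\check e_{j_i}\wedge\cdots\wedge e_{j_k}$. The joint approximate point spectrum of $(A_1,\dots,A_n)$ is the set of $w\in\mathbb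 C^n$ for which there are unit vectors $x_m$ with $(A_j-w_j)x_m\to0$ for all $j$. *)

From HB Require Import structures.
From mathcomp Require Import all_boot all_order all_algebra.
From mathcomp Require Import all_classical all_reals topology normedtype sequences.
From mathcomp Require Import complex.
Set Implicit Arguments. Unset Strict Implicit. Unset Printing Implicit Defensive.
Import Order.TTheory GRing.Theory Num.Theory.
Import numFieldNormedType.Exports.
Local Open Scope classical_set_scope.
Local Open Scope ring_scope.

Section Defs.
Variables (R : realType) (H : lmodType R[i]).

Definition ipnorm (ip : H -> H -> R[i]) (x : H) : R := Num.sqrt (complex.Re (ip x x)).

Definition is_hilbert_space (ip : H -> H -> R[i]) : Prop :=
  [/\ (forall (a : R[i]) (x y z : H), ip (a *: x + y) z = a * ip x z + ip y z),
      (forall x y : H, ip x y = conjc (ip y x)),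
      (forall x : H, complex.Im (ip x x) = 0 /\ 0 <= complex.Re (ip x x)),
      (forall x : H, ip x x = 0 -> x = 0) &
      (forall u : nat -> H,
         (forall e : R, 0 < e -> exists N : nat, forall m p : nat,
             (N <= m)%N -> (N <= p)%N -> ipnorm ip (u m - u p) < e) ->
         exists l : H, (fun m => ipnorm ip (u m - l)) @ \oo --> (0 : R))].

Definition bounded_op (ip : H -> H -> R[i]) (T : H -> H) : Prop :=
  linear T /\ exists c : R, forall x : H, ipnorm ip (T x) <= c * ipnorm ip x.

Definition is_adjoint (ip : H -> H -> R[i]) (T Tadj : H -> H) : Prop :=
  forall x y : H, ip (T x) y = ip x (Tadj y).

Definition doubly_commuting (n : nat) (T Tadj : 'I_n -> H -> H) : Prop :=
  forall i j : 'I_n, i != j ->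
    (forall x, T i (T j x) = T j (T i x)) /\
    (forall x, Tadj i (T j x) = T j (Tadj i x)).

(* Property (1) for T with adjoint Tadj; (T - z)^* = Tadj - conj z. *)
Definition property1 (ip : H -> H -> R[i]) (T Tadj : H -> H) : Prop :=
  forall (z : R[i]) (x : nat -> H),
    (forall m, ipnorm ip (x m) = 1) ->
    (fun m => ipnorm ip (T (x m) - z *: x m)) @ \oo --> (0 : R) ->
    (fun m => ipnorm ip (Tadj (x m) - conjc z *: x m)) @ \oo --> (0 : R).

(* E^n(H) = H (x) E^n is encoded as maps {set 'I_n} -> H,
   f S being the coefficient of e_S = e_{j_1} /\ ... /\ e_{j_k}
   (j_1 < ... < j_k the elements of S).  E^n_k(H) = those f supported on
   k-element sets. *)
Definition kchain (n k : nat) (f : {set 'I_n} -> H) : Prop :=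
  forall S : {set 'I_n}, #|S| != k -> f S = 0.

(* D(x (x) e_S) = sum_i (-1)^(i-1) A_{j_i} x (x) e_{S \ j_i}; hence the
   coefficient of e_S' in D f is sum over j notin S' of
   (-1)^#{i in S' | i < j} A_j (f (j |: S')). *)
Definition koszulD (n : nat) (A : 'I_n -> H -> H) (f : {set 'I_n} -> H)
  : {set 'I_n} -> H :=
  fun S' => \sum_(j < n | j \notin S')
     (-1) ^+ #|[set i in S' | (i < j)%N]| *: A j (f (j |: S')).

Definition koszul_exact_at (n : nat) (A : 'I_n -> H -> H) (k : nat) : Prop :=
  (forall f, kchain k f -> koszulD A f = (fun _ => 0) ->
     exists g, kchain k.+1 g /\ koszulD A g = f) /\
  (forall g, kchain k.+1 g -> koszulD A (koszulD A g) = (fun _ => 0)).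

Definition koszul_exact (n : nat) (A : 'I_n -> H -> H) : Prop :=
  forall k : nat, (k <= n)%N -> koszul_exact_at A k.

Definition taylor_spectrum (n : nat) (T : 'I_n -> H -> H) (z : 'I_n -> R[i])
  : Prop :=
  ~ koszul_exact (fun j x => T j x - z j *: x).

Definition joint_approx_point_spectrum (ip : H -> H -> R[i]) (n : nat)
  (A : 'I_n -> H -> H) (w : 'I_n -> R[i]) : Prop :=
  exists y : nat -> H, (forall m, ipnorm ip (y m) = 1) /\
    forall j : 'I_n, (fun m => ipnorm ip (A j (y m) - w j *: y m)) @ \oo --> (0 : R).

End Defs.

(* Write A_j := T_j - z_j and A_j^* = T_j^* - conj z_j, and for S a subset of
   {1..n} let L_S := sum_(j notin S) A_j A_j^* + sum_(j in S) A_j^* A_j.  Double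
   commutativity makes L the Laplacian of the Koszul complex: if delta is the
   differential built like D from the A_j^* in the opposite direction, then
   D delta + delta D = L, and L commutes with D.  Moreover
   Re <L_S x, x> = sum_(j notin S) |A_j^* x|^2 + sum_(j in S) |A_j x|^2.
   Were this bounded below by c |x|^2 for every S, each L_S would be invertible
   (a bounded coercive operator on a Hilbert space is onto, by Richardson
   iteration), and f |-> delta (L^-1 f) would show the Koszul complex exact,
   contradicting z in sigma_T(T).  Hence for some S there are unit vectors y_m
   with A_j y_m -> 0 for j in S and A_j^* y_m -> 0 for j notin S; Property (1)
   turns the former into A_j^* y_m -> 0 as well. *)

From HB Require Import structures.
From mathcomp Require Import all_boot all_order all_algebra.
From mathcomp Require Import all_classical all_reals topology normedtype sequences.
From mathcomp Require Import complex.
From mathcomp Require Import ring lra.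
Import Order.TTheory GRing.Theory Num.Theory.
Import numFieldNormedType.Exports.
Local Open Scope classical_set_scope.
Local Open Scope ring_scope.
Set Implicit Arguments. Unset Strict Implicit. Unset Printing Implicit Defensive.

Section LinearFun.
Variables (K : pzRingType) (U V : lmodType K) (f : U -> V).
Hypothesis f_lin : linear f.
#[local] HB.instance Definition _ := GRing.isLinear.Build _ _ _ _ f f_lin.

Lemma lin0 : f 0 = 0. Proof. exact: linear0. Qed.
Lemma linD x y : f (x + y) = f x + f y. Proof. exact: linearD. Qed.
Lemma linB x y : f (x - y) = f x - f y. Proof. exact: linearB. Qed.
Lemma linZ a x : f (a *: x) = a *: f x. Proof. exact: linearZZ. Qed.
Lemma lin_sum I (r : seq I) (P : pred I) (F : I -> U) :
  f (\sum_(i <- r | P i) F i) = \sum_(i <- r | P i) f (F i).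
Proof. exact: linear_sum. Qed.

End LinearFun.

Lemma commute_shift (K : comNzRingType) (V : lmodType K) (P Q : V -> V) (a b : K) :
  linear P -> linear Q -> (forall x, P (Q x) = Q (P x)) ->
  forall x, P (Q x - b *: x) - a *: (Q x - b *: x) =
            Q (P x - a *: x) - b *: (P x - a *: x).
Proof.
move=> P_lin Q_lin PQ x; rewrite (linB P_lin) (linB Q_lin) (linZ P_lin) (linZ Q_lin) PQ.
rewrite !scalerBr !scalerA mulrC !opprB !addrA.
by rewrite addrAC [RHS]addrAC; congr (_ + _); rewrite addrAC.
Qed.

Lemma Re_realM (R : rcfType) (r : R) (w : R[i]) :
  complex.Re (r%:C%C * w) = r * complex.Re w.
Proof. by case: w => a b /=; rewrite mul0r subr0. Qed.

Section InnerProduct.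
Variables (R : realType) (H : lmodType R[i]) (ip : H -> H -> R[i]).
Hypothesis hH : is_hilbert_space ip.
Local Notation nm := (ipnorm ip).

Lemma ipPl a x y z : ip (a *: x + y) z = a * ip x z + ip y z.
Proof. by case: hH. Qed.

Lemma ipC x y : ip x y = conjc (ip y x).
Proof. by case: hH. Qed.

Lemma ip0l z : ip 0 z = 0.
Proof. by have := ipPl (-1) 0 0 z; rewrite scaler0 addr0 mulN1r addNr. Qed.

Lemma ipDl x y z : ip (x + y) z = ip x z + ip y z.
Proof. by rewrite -[x in LHS]scale1r ipPl mul1r. Qed.

Lemma ipZl a x z : ip (a *: x) z = a * ip x z.
Proof. by rewrite -[a *: x]addr0 ipPl ip0l addr0. Qed.

Lemma ipBl x y z : ip (x - y) z = ip x z - ip y z.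
Proof. by rewrite addrC -scaleN1r ipPl mulN1r addrC. Qed.

Lemma ip_suml I (r : seq I) (P : pred I) (F : I -> H) z :
  ip (\sum_(i <- r | P i) F i) z = \sum_(i <- r | P i) ip (F i) z.
Proof. exact: (big_morph (ip^~ z) (fun x y => ipDl x y z) (ip0l z)). Qed.

Lemma ip0r z : ip z 0 = 0.
Proof. by rewrite ipC ip0l rmorph0. Qed.

Lemma ipDr x y z : ip x (y + z) = ip x y + ip x z.
Proof. by rewrite [LHS]ipC ipDl rmorphD [ip x y]ipC [ip x z]ipC. Qed.

Lemma ipZr a x z : ip x (a *: z) = conjc a * ip x z.
Proof. by rewrite [LHS]ipC ipZl rmorphM [ip x z]ipC. Qed.

Lemma ipBr x y z : ip x (y - z) = ip x y - ip x z.
Proof. by rewrite [LHS]ipC ipBl rmorphB [ip x y]ipC [ip x z]ipC. Qed.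

Lemma ipr_ext v v' : (forall u, ip u v = ip u v') -> v = v'.
Proof.
move=> eq_v; apply/eqP; rewrite -subr_eq0; apply/eqP.
by case: hH => _ _ _ + _; apply; rewrite ipBr eq_v subrr.
Qed.

Lemma ip_self x : ip x x = (nm x ^+ 2)%:C%C.
Proof.
case: hH => _ _ /(_ x) [] + + _ _; rewrite /ipnorm.
by case: (ip x x) => a b /= -> a_ge0; rewrite sqr_sqrtr.
Qed.

Lemma Re_ip_self x : complex.Re (ip x x) = nm x ^+ 2.
Proof. by rewrite ip_self. Qed.

Lemma ipnorm_ge0 x : 0 <= nm x.
Proof. exact: sqrtr_ge0. Qed.

Lemma ipnorm_eq0 x : nm x = 0 -> x = 0.
Proof.
by move=> x0; case: hH => _ _ _ + _; apply; rewrite ip_self x0 expr0n.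
Qed.

Lemma ipnormZ a x : nm (a *: x) = Normc.normc a * nm x.
Proof.
rewrite {1}/ipnorm ipZl ipZr ip_self mulrA; case: a => a b /=.
rewrite mulr0 subr0 mulrN opprK -!expr2 sqrtrM ?addr_ge0 ?sqr_ge0 //.
by rewrite sqrtr_sqr ger0_norm ?ipnorm_ge0.
Qed.

Lemma ipnorm_realZ (r : R) x : nm (r%:C%C *: x) = `|r| * nm x.
Proof. by rewrite ipnormZ /= expr0n addr0 sqrtr_sqr. Qed.

Lemma ipnormN x : nm (- x) = nm x.
Proof. by rewrite -scaleN1r ipnormZ /= oppr0 expr0n addr0 sqrtr_sqr normrN1 mul1r. Qed.

Lemma Re_ipC x y : complex.Re (ip x y) = complex.Re (ip y x).
Proof. by rewrite ipC; case: (ip y x). Qed.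

Lemma ipnorm_sqrD x y :
  nm (x + y) ^+ 2 = nm x ^+ 2 + nm y ^+ 2 + 2 * complex.Re (ip x y).
Proof.
by rewrite -!Re_ip_self ipDl !ipDr !raddfD /= [complex.Re (ip y x)]Re_ipC; ring.
Qed.

Lemma Re_ip_le x y : complex.Re (ip x y) <= nm x * nm y.
Proof.
have [/ipnorm_eq0 -> | nx0] := eqVneq (nm x) 0.
  by rewrite ip0l mulr_ge0 ?ipnorm_ge0.
have [/ipnorm_eq0 -> | ny0] := eqVneq (nm y) 0.
  by rewrite ip0r mulr_ge0 ?ipnorm_ge0.
have ab_gt0 : 0 < nm x * nm y by rewrite mulr_gt0 // lt0r ?nx0 ?ny0 ipnorm_ge0.
have := sqr_ge0 (nm ((nm y)%:C%C *: x + (- nm x)%:C%C *: y)).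
rewrite ipnorm_sqrD !ipnorm_realZ ipZl ipZr conjc_real !Re_realM normrN.
rewrite !ger0_norm ?ipnorm_ge0 // => ge0.
by rewrite -(ler_pM2l ab_gt0); nra.
Qed.

Lemma ler_ipnormD x y : nm (x + y) <= nm x + nm y.
Proof.
rewrite -ler_sqr ?nnegrE ?addr_ge0 ?ipnorm_ge0 // ipnorm_sqrD.
have := Re_ip_le x y; nra.
Qed.

Lemma bounded_op_bound T :
  bounded_op ip T -> exists2 c, 0 <= c & forall x, nm (T x) <= c * nm x.
Proof.
case=> _ [c T_le]; exists `|c| => // x.
by rewrite (le_trans (T_le x)) // ler_wpM2r ?ipnorm_ge0 ?ler_norm.
Qed.

Lemma bounded_op_shift T z :
  bounded_op ip T -> bounded_op ip (fun x => T x - z *: x).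
Proof.
case=> T_lin [c T_le]; split.
  pose TL : {linear H -> H} := HB.pack T (GRing.isLinear.Build _ _ _ _ T T_lin).
  exact: (linearP (TL \- z \*: idfun)).
exists (c + Normc.normc (- z)) => x.
by rewrite mulrDl (le_trans (ler_ipnormD _ _)) // -scaleNr ipnormZ lerD.
Qed.

Lemma bounded_op_comp T U :
  bounded_op ip T -> bounded_op ip U -> bounded_op ip (fun x => T (U x)).
Proof.
move=> hT hU; split; first by move=> a x y; rewrite hU.1 hT.1.
have [c c_ge0 T_le] := bounded_op_bound hT; have [d _ U_le] := bounded_op_bound hU.
by exists (c * d) => x; rewrite -mulrA (le_trans (T_le _)) // ler_wpM2l.
Qed.

Lemma bounded_op_add T U :
  bounded_op ip T -> bounded_op ip U -> bounded_op ip (fun x => T x + U x).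
Proof.
move=> [T_lin [c T_le]] [U_lin [d U_le]]; split.
  pose TL : {linear H -> H} := HB.pack T (GRing.isLinear.Build _ _ _ _ T T_lin).
  pose UL : {linear H -> H} := HB.pack U (GRing.isLinear.Build _ _ _ _ U U_lin).
  exact: (linearP (TL \+ UL)).
by exists (c + d) => x; rewrite mulrDl (le_trans (ler_ipnormD _ _)) // lerD.
Qed.

Lemma bounded_op_sum I (r : seq I) (P : pred I) (F : I -> H -> H) :
  (forall i, bounded_op ip (F i)) ->
  bounded_op ip (fun x => \sum_(i <- r | P i) F i x).
Proof.
move=> hF; elim: r => [|i r IHr].
  split=> [a x y|]; first by rewrite !big_nil scaler0 addr0.
  by exists 0 => x; rewrite big_nil mul0r /ipnorm ip0l sqrtr0.
case: (boolP (P i)) => Pi.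
  under eq_fun do rewrite big_cons Pi.
  exact: bounded_op_add.
by under eq_fun do rewrite big_cons (negbTE Pi).
Qed.

Lemma is_adjoint_sym T Ta : is_adjoint ip T Ta -> is_adjoint ip Ta T.
Proof. by move=> adj x y; rewrite ipC -adj -ipC. Qed.

Lemma is_adjoint_shift T Ta z : is_adjoint ip T Ta ->
  is_adjoint ip (fun x => T x - z *: x) (fun x => Ta x - conjc z *: x).
Proof. by move=> adj x y; rewrite ipBl ipBr ipZl ipZr conjcK adj. Qed.

Lemma adjoint_bounded_op T Ta :
  bounded_op ip T -> is_adjoint ip T Ta -> bounded_op ip Ta.
Proof.
move=> hT adj; split.
  by move=> a x y; apply: ipr_ext => u; rewrite -adj ipDr ipZr adj ipDr ipZr -!adj.
have [c c_ge0 T_le] := bounded_op_bound hT; exists c => y.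
have [Tay0 | Tay_gt0] := eqVneq (nm (Ta y)) 0.
  by rewrite Tay0 mulr_ge0 ?ipnorm_ge0.
have : nm (Ta y) ^+ 2 <= c * nm (Ta y) * nm y.
  rewrite -Re_ip_self -adj (le_trans (Re_ip_le _ _)) //.
  by rewrite ler_wpM2r ?ipnorm_ge0.
by rewrite expr2 mulrAC ler_pM2r // lt0r Tay_gt0 ipnorm_ge0.
Qed.

Lemma ipnormB x y : nm (x - y) = nm (y - x).
Proof. by rewrite -ipnormN opprB. Qed.

Lemma ler_ipnormB x y z : nm (x - z) <= nm (x - y) + nm (y - z).
Proof. by rewrite (le_trans _ (ler_ipnormD _ _)) // addrA subrK. Qed.

Lemma geometric_cauchy_cvg (x : nat -> H) (C q : R) : 0 <= q < 1 ->
  (forall p m, (p <= m)%N -> nm (x m - x p) <= C * q ^+ p) ->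
  exists l, (fun m => nm (x m - l)) @ \oo --> (0 : R).
Proof.
move=> /andP[q_ge0 q_lt1] x_le.
have Cq0 : (fun k => C * q ^+ k) @ \oo --> (0 : R).
  by rewrite -(mulr0 C); apply: cvgM (cvg_cst C) _; apply: cvg_expr; rewrite ger0_norm.
case: hH => _ _ _ _; apply=> e e_gt0.
have [N _ /(_ N (leqnn N)) /= CqN] := cvgr_lt _ Cq0 _ (divr_gt0 e_gt0 (ltr0Sn _ 1)).
exists N => m p Nm Np; rewrite (le_lt_trans (ler_ipnormB _ (x N) _)) //.
rewrite [nm (x N - _)]ipnormB (le_lt_trans (lerD (x_le _ _ Nm) (x_le _ _ Np))) //.
by rewrite [e]splitr ltrD.
Qed.

Lemma contraction_fixpoint (F : H -> H) (q : R) : 0 <= q < 1 ->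
  (forall u v, nm (F u - F v) <= q * nm (u - v)) -> exists l, F l = l.
Proof.
move=> q01 F_le; have /andP[q_ge0 q_lt1] := q01.
pose x k := iter k F 0; pose d := nm (x 1%N - x 0%N); pose C := d / (1 - q).
have C_ge0 : 0 <= C by rewrite divr_ge0 ?ipnorm_ge0 // subr_ge0 ltW.
have step k : nm (x k.+1 - x k) <= q ^+ k * d.
  elim: k => [|k IHk]; first by rewrite mul1r.
  by rewrite (le_trans (F_le _ _)) // exprS -mulrA ler_wpM2l.
have tail p k : nm (x (p + k)%N - x p) <= C * (q ^+ p - q ^+ (p + k)).
  elim: k => [|k IHk]; first by rewrite addn0 !subrr mulr0 /ipnorm ip0l sqrtr0.
  rewrite (le_trans (ler_ipnormB _ (x (p + k)%N) _)) // addnS.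
  rewrite (le_trans (lerD (step _) IHk)) // /C exprS.
  by rewrite le_eqVlt; apply/orP; left; apply/eqP; field; rewrite subr_eq0 gt_eqF.
have [l xl] : exists l, (fun m => nm (x m - l)) @ \oo --> (0 : R).
  apply: (geometric_cauchy_cvg (C := C) q01) => p m /subnKC <-.
  by rewrite (le_trans (tail _ _)) // ler_wpM2l // gerBl exprn_ge0.
exists l; apply/eqP; rewrite -subr_eq0; apply/eqP/ipnorm_eq0/eqP.
rewrite eq_le ipnorm_ge0 andbT.
have lim0 : (fun m => q * nm (x m - l) + nm (x m.+1 - l)) @ \oo --> (0 : R).
  rewrite -[0]addr0 -{1}(mulr0 q); apply: cvgD; first exact: cvgM (cvg_cst q) xl.
  by have := xl; rewrite -cvg_shiftS.
apply: (ler_cvg_to (cvg_cst _) lim0); apply: nearW => m.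
rewrite (le_trans (ler_ipnormB _ (F (x m)) _)) // lerD // ipnormB.
by rewrite (le_trans (F_le _ _)).
Qed.

Definition coercive (B : H -> H) :=
  exists2 c, 0 < c & forall x, c * nm x ^+ 2 <= complex.Re (ip (B x) x).

Lemma coercive_eq0 B x : coercive B -> B x = 0 -> x = 0.
Proof.
move=> [c c_gt0 B_ge] Bx0; apply: ipnorm_eq0; apply/eqP.
rewrite -sqrf_eq0 eq_le sqr_ge0 andbT -(pmulr_rle0 _ c_gt0).
by have := B_ge x; rewrite Bx0 ip0l.
Qed.

Lemma coercive_contraction B (c K : R) : 0 < c <= K ->
  (forall x, nm (B x) <= K * nm x) ->
  (forall x, c * nm x ^+ 2 <= complex.Re (ip (B x) x)) ->
  forall x, nm (x - (c / K ^+ 2)%:C%C *: B x) <= Num.sqrt (1 - (c / K) ^+ 2) * nm x.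
Proof.
move=> /andP[c_gt0 c_le_K] B_le B_ge x.
(* t = c / K^2 minimises 1 - 2 t c + t^2 K^2, the bound on the squared ratio *)
have K_gt0 : 0 < K := lt_le_trans c_gt0 c_le_K.
have s_ge0 : 0 <= 1 - (c / K) ^+ 2.
  by rewrite subr_ge0 exprn_ile1 ?divr_ge0 ?(ltW c_gt0) ?(ltW K_gt0) // ler_pdivrMr // mul1r.
rewrite -ler_sqr ?nnegrE ?mulr_ge0 ?sqrtr_ge0 ?ipnorm_ge0 //.
rewrite exprMn (sqr_sqrtr s_ge0) -scaleNr -rmorphN ipnorm_sqrD ipnorm_realZ.
rewrite ipZr conjc_real Re_realM Re_ipC exprMn real_normK ?num_real //.
have BxK : nm (B x) ^+ 2 <= K ^+ 2 * nm x ^+ 2.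
  by rewrite -exprMn ler_sqr ?nnegrE ?mulr_ge0 ?ipnorm_ge0 ?(ltW K_gt0) ?B_le.
have := B_ge x; set E := nm x ^+ 2; set Y := complex.Re _; move: BxK.
set X := nm (B x) ^+ 2 => BxK cEY.
have tK : (c / K ^+ 2) ^+ 2 * K ^+ 2 = (c / K) ^+ 2 by field; rewrite gt_eqF.
have tc : c / K ^+ 2 * c = (c / K) ^+ 2 by field; rewrite gt_eqF.
have tX : (c / K ^+ 2) ^+ 2 * X <= (c / K) ^+ 2 * E.
  by rewrite -tK -mulrA ler_wpM2l ?sqr_ge0.
have tY : (c / K) ^+ 2 * E <= c / K ^+ 2 * Y.
  by rewrite -tc -mulrA ler_wpM2l // divr_ge0 ?sqr_ge0 ?ltW.
rewrite sqrrN; lra.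
Qed.

Lemma coercive_surjective B :
  bounded_op ip B -> coercive B -> forall w, exists x, B x = w.
Proof.
move=> B_bdd [c c_gt0 B_ge] w; have [M M_ge0 B_le] := bounded_op_bound B_bdd.
pose K := M + c; pose t := (c / K ^+ 2)%:C%C; pose q := Num.sqrt (1 - (c / K) ^+ 2).
have cK : 0 < c <= K by rewrite c_gt0 /K lerDr.
have K_gt0 : 0 < K by rewrite ltr_wpDl.
have BK x : nm (B x) <= K * nm x.
  by rewrite (le_trans (B_le x)) // ler_wpM2r ?ipnorm_ge0 // /K lerDl ltW.
have q01 : 0 <= q < 1.
  by rewrite sqrtr_ge0 -sqrtr1 ltr_sqrt ?ltr01 // gtrBl exprn_gt0 // divr_gt0.
(* Richardson iteration: the fixed point of F solves B x = w *)
pose F v := v + t *: (w - B v).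
have F_contr u v : nm (F u - F v) <= q * nm (u - v).
  have -> : F u - F v = u - v - t *: B (u - v).
    rewrite /F opprD addrACA -scalerBr (linB B_bdd.1) -scalerN.
    congr (_ + (_ *: _)).
    by rewrite !opprB addrC addrA subrK.
  exact: coercive_contraction.
have [l /eqP] := contraction_fixpoint q01 F_contr.
rewrite /F addrC -subr_eq0 addrK scaler_eq0 subr_eq0 => /orP[/eqP [] | /eqP ->]; last by exists l.
by move=> /eqP; rewrite mulf_eq0 invr_eq0 expf_eq0 !gt_eqF.
Qed.

Lemma approx_null_of_not_bounded_below (I : finType) (C : I -> H -> H) :
  (forall i, linear (C i)) ->
  ~ (exists2 c, 0 < c & forall x, c * nm x ^+ 2 <= \sum_i nm (C i x) ^+ 2) ->
  exists y : nat -> H, (forall m, nm (y m) = 1) /\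
    forall i, (fun m => nm (C i (y m))) @ \oo --> (0 : R).
Proof.
move=> C_lin not_bdd.
have small m : exists x, \sum_i nm (C i x) ^+ 2 < harmonic m ^+ 2 * nm x ^+ 2.
  apply: contrapT => no_x; apply: not_bdd; exists (harmonic m ^+ 2).
    by rewrite exprn_gt0 ?harmonic_gt0.
  by move=> x; rewrite leNgt; apply/negP => lt; apply: no_x; exists x.
have [x xP] := choice small.
have x_gt0 m : 0 < nm (x m).
  rewrite lt0r ipnorm_ge0 andbT; apply/eqP => x0; move: (xP m).
  by rewrite x0 expr0n mulr0 ltNge sumr_ge0 // => i _; rewrite sqr_ge0.
pose y m := ((nm (x m))^-1)%:C%C *: x m.
have y1 m : nm (y m) = 1.
  by rewrite ipnorm_realZ ger0_norm ?invr_ge0 ?ipnorm_ge0 // mulVf // gt_eqF.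
exists y; split=> // i.
apply: (@squeeze_cvgr _ _ _ _ (fun=> 0) harmonic); last exact: cvg_harmonic; last exact: cvg_cst.
apply: nearW => m; rewrite ipnorm_ge0 /=.
rewrite -ler_sqr ?nnegrE ?ipnorm_ge0 ?harmonic_ge0 // /y (linZ (C_lin i)) ipnorm_realZ.
rewrite ger0_norm ?invr_ge0 ?ipnorm_ge0 // exprMn exprVn mulrC ler_pdivrMr ?exprn_gt0 //.
apply: le_trans (ltW (xP m)); rewrite (bigD1 i) //= lerDl.
by rewrite sumr_ge0 // => j _; rewrite sqr_ge0.
Qed.

End InnerProduct.

Section Koszul.
Variables (R : realType) (H : lmodType R[i]) (n : nat) (A Ad : 'I_n -> H -> H).
Hypotheses (A_lin : forall j, linear (A j)) (Ad_lin : forall j, linear (Ad j)).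
Hypothesis A_comm : forall i j : 'I_n, i != j -> forall x, A i (A j x) = A j (A i x).
Hypothesis AdA_comm : forall i j : 'I_n, i != j -> forall x, Ad i (A j x) = A j (Ad i x).

Definition koszul_sign (S : {set 'I_n}) (j : 'I_n) : R[i] :=
  (-1) ^+ #|[set i in S | (i < j)%N]|.

Definition koszulDadj (h : {set 'I_n} -> H) (S : {set 'I_n}) : H :=
  \sum_(j < n | j \in S) koszul_sign (S :\ j) j *: Ad j (h (S :\ j)).

Definition laplacian (S : {set 'I_n}) (x : H) : H :=
  \sum_(i < n | i \notin S) A i (Ad i x) + \sum_(i < n | i \in S) Ad i (A i x).

Lemma koszulDE (f : {set 'I_n} -> H) (S : {set 'I_n}) :
  koszulD A f S = \sum_(j < n | j \notin S) koszul_sign S j *: A j (f (j |: S)).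
Proof. by []. Qed.

Lemma koszul_signU1 (x : 'I_n) (S : {set 'I_n}) (j : 'I_n) : x \notin S ->
  koszul_sign (x |: S) j = (-1) ^+ (x < j)%N * koszul_sign S j.
Proof.
move=> xS; rewrite /koszul_sign -exprD; congr (_ ^+ _).
have -> : [set i in x |: S | (i < j)%N] =
    if (x < j)%N then x |: [set i in S | (i < j)%N] else [set i in S | (i < j)%N].
  apply/setP => i; case: ifP => xj; rewrite !inE;
  by case: (eqVneq i x) => [->|] //=; rewrite ?xj ?(negbTE xS) ?andbF.
by case: ifP => xj //; rewrite cardsU1 inE (negbTE xS).
Qed.

Lemma koszul_signD1 (x : 'I_n) (S : {set 'I_n}) (j : 'I_n) : x \in S ->
  koszul_sign S j = (-1) ^+ (x < j)%N * koszul_sign (S :\ x) j.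
Proof. by move=> xS; rewrite -koszul_signU1 ?setD11 // finset.setD1K. Qed.

Lemma sign_ltn_swap (i j : 'I_n) : i != j ->
  (-1) ^+ (j < i)%N = - (-1) ^+ (i < j)%N :> R[i].
Proof.
move=> ij; case: ltngtP => [||/val_inj eq_ij]; rewrite ?expr0 ?expr1 ?opprK //.
by rewrite eq_ij eqxx in ij.
Qed.

Lemma setU1D1C (i j : 'I_n) (S : {set 'I_n}) : i != j -> (j |: S) :\ i = j |: (S :\ i).
Proof.
move=> ij; apply/setP => k; rewrite !inE.
by case: (eqVneq k i) => [->|//]; rewrite (negbTE ij).
Qed.

Lemma laplacian_linear (S : {set 'I_n}) : linear (laplacian S).
Proof.
move=> a x y; rewrite /laplacian scalerDr !scaler_sumr addrACA -!big_split /=.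
by congr (_ + _); apply: eq_bigr => i _; rewrite ?(Ad_lin i) ?(A_lin i) ?(Ad_lin i).
Qed.


Lemma koszul_signK (S : {set 'I_n}) j : koszul_sign S j * koszul_sign S j = 1.
Proof. by rewrite -expr2 sqrr_sign. Qed.

Lemma koszul_homotopy (h : {set 'I_n} -> H) (S : {set 'I_n}) :
  koszulD A (koszulDadj h) S + koszulDadj (koszulD A h) S = laplacian S (h S).
Proof.
have DDadj j : j \notin S -> koszul_sign S j *: A j (koszulDadj h (j |: S)) =
    A j (Ad j (h S)) + \sum_(i < n | i \in S)
      (koszul_sign S j * koszul_sign (j |: (S :\ i)) i) *: A j (Ad i (h (j |: (S :\ i)))).
  move=> jS; rewrite /koszulDadj (bigD1 j) ?setU11 //= setU1K //.
  rewrite (linD (A_lin j)) (linZ (A_lin j)) scalerDr scalerA koszul_signK scale1r.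
  congr (_ + _); rewrite (lin_sum (A_lin j)) scaler_sumr; apply: eq_big => i.
    by rewrite !inE; case: (eqVneq i j) => [->|] /=; [exact/esym/negbTE | rewrite andbT].
  by move=> /andP[_ ij]; rewrite setU1D1C // (linZ (A_lin j)) scalerA.
have DadjD i : i \in S -> koszul_sign (S :\ i) i *: Ad i (koszulD A h (S :\ i)) =
    Ad i (A i (h S)) + \sum_(j < n | j \notin S)
      (koszul_sign (S :\ i) i * koszul_sign (S :\ i) j) *: Ad i (A j (h (j |: (S :\ i)))).
  move=> iS; rewrite koszulDE (bigD1 i) ?setD11 //= finset.setD1K //.
  rewrite (linD (Ad_lin i)) (linZ (Ad_lin i)) scalerDr scalerA koszul_signK scale1r.
  congr (_ + _); rewrite (lin_sum (Ad_lin i)) scaler_sumr; apply: eq_big => j.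
    by rewrite !inE; case: (eqVneq j i) => [->|] /=; [exact/esym/negbF | rewrite andbT].
  by move=> _; rewrite (linZ (Ad_lin i)) scalerA.
rewrite koszulDE (eq_bigr _ DDadj) [koszulDadj _ S]/koszulDadj (eq_bigr _ DadjD).
rewrite !big_split /= /laplacian addrACA -[RHS]addr0; congr (_ + _).
rewrite [X in _ + X = 0]exchange_big -big_split /=; apply: big1 => j jS.
rewrite -big_split; apply: big1 => i iS /=.
have ij : i != j by apply: contraNneq jS => <-.
have jSi : j \notin S :\ i by rewrite !inE negb_and jS orbT.
rewrite (AdA_comm ij) -scalerDl (koszul_signD1 _ iS) (koszul_signU1 _ jSi) (sign_ltn_swap ij).
move: ((-1) ^+ _) (sqrr_sign R[i] (i < j)%N) (koszul_sign _ j) (koszul_sign _ i).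
move=> e + a b; rewrite expr2 => ee; rewrite (_ : _ + _ = 0) ?scale0r //.
by rewrite mulNr mulrN mulrACA ee mul1r [b * a]mulrC addNr.
Qed.


Lemma koszulDD (g : {set 'I_n} -> H) (S : {set 'I_n}) : koszulD A (koszulD A g) S = 0.
Proof.
pose G j i := (koszul_sign S j * koszul_sign (j |: S) i) *: A j (A i (g (i |: (j |: S)))).
have -> : koszulD A (koszulD A g) S =
    \sum_(j < n | j \notin S) \sum_(i < n | (i \notin S) && (i != j)) G j i.
  rewrite koszulDE; apply: eq_bigr => j jS.
  rewrite koszulDE (lin_sum (A_lin j)) scaler_sumr; apply: eq_big => i.
    by rewrite !inE negb_or andbC.
  by move=> _; rewrite (linZ (A_lin j)) scalerA.
have G_anti i j : i \notin S -> j \notin S -> i != j -> G j i = - G i j.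
  move=> iS jS ij; rewrite /G !koszul_signU1 // finset.setUCA (A_comm ij) -scaleNr.
  by congr (_ *: _); rewrite (sign_ltn_swap ij); ring.
set X := \sum_(j < n | _) _; suff: X = - X.
  by move/eqP; rewrite -addr_eq0 -mulr2n -scaler_nat scaler_eq0 pnatr_eq0 => /eqP.
rewrite {1}/X (exchange_big_dep (fun i => i \notin S)) /=; last by move=> j i _ /andP[].
rewrite -sumrN; apply: eq_bigr => i iS; rewrite -sumrN; apply: eq_big => j.
  by rewrite iS /= eq_sym.
by move=> /andP[jS /andP[_ ij]]; rewrite (G_anti i j iS jS ij).
Qed.

Lemma laplacian_commute (j : 'I_n) (S : {set 'I_n}) x : j \notin S ->
  A j (laplacian (j |: S) x) = laplacian S (A j x).
Proof.
move=> jS; rewrite /laplacian (linD (A_lin j)) !(lin_sum (A_lin j)).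
rewrite [in RHS](bigD1 j) //= [X in _ + X = _](bigD1 j) ?setU11 //=.
rewrite addrCA addrA; congr (_ + _ + _).
  apply: eq_big => i; first by rewrite !inE negb_or andbC.
  move=> iS'; have ji : j != i by apply: contraNneq iS' => <-; rewrite setU11.
  by rewrite (A_comm ji) -(AdA_comm (_ : i != j)) // eq_sym.
apply: eq_big => i.
  by rewrite !inE; case: (eqVneq i j) => [->|] /=; [exact/esym/negbTE | rewrite andbT].
by move=> /andP[_ ij]; rewrite -(AdA_comm ij) -(A_comm ij).
Qed.

Lemma koszulD_laplacian (h : {set 'I_n} -> H) (S : {set 'I_n}) :
  koszulD A (fun S => laplacian S (h S)) S = laplacian S (koszulD A h S).
Proof.
rewrite !koszulDE (lin_sum (laplacian_linear S)); apply: eq_bigr => j jS.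
by rewrite (linZ (laplacian_linear S)) laplacian_commute.
Qed.

Lemma koszul_exact_of_laplacian :
  (forall S x, laplacian S x = 0 -> x = 0) ->
  (forall S w, exists x, laplacian S x = w) -> koszul_exact A.
Proof.
move=> L_inj L_surj k _; split=> [f kf Df|g _]; last by apply: funext => S; exact: koszulDD.
have [h hh] := choice (fun S => L_surj S (f S)).
have kh : kchain k h by move=> S nS; apply: (L_inj S); rewrite hh kf.
have Dh S : koszulD A h S = 0.
  by apply: (L_inj S); rewrite -koszulD_laplacian (funext hh) Df.
exists (koszulDadj h); split.
  move=> S nS; rewrite /koszulDadj big1 // => j jS.
  rewrite kh ?(lin0 (Ad_lin j)) ?scaler0 //; apply: contra nS => /eqP <-.
  by rewrite (cardsD1 j S) jS.
apply: funext => S; rewrite -[f S]hh -koszul_homotopy.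
by rewrite [koszulDadj _ S]big1 ?addr0 // => j _; rewrite Dh (lin0 (Ad_lin j)) scaler0.
Qed.

End Koszul.

Section KoszulLaplacianHilbert.
Variables (R : realType) (H : lmodType R[i]) (ip : H -> H -> R[i]).
Variables (n : nat) (A Ad : 'I_n -> H -> H).
Hypothesis hH : is_hilbert_space ip.
Hypotheses (A_bdd : forall j, bounded_op ip (A j)) (A_adj : forall j, is_adjoint ip (A j) (Ad j)).
Hypothesis A_comm : forall i j : 'I_n, i != j -> forall x, A i (A j x) = A j (A i x).
Hypothesis AdA_comm : forall i j : 'I_n, i != j -> forall x, Ad i (A j x) = A j (Ad i x).
Local Notation nm := (ipnorm ip).

Let Ad_bdd j : bounded_op ip (Ad j) := adjoint_bounded_op hH (A_bdd j) (A_adj j).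

Definition laplacian_factor (S : {set 'I_n}) (i : 'I_n) (x : H) : H :=
  if i \in S then A i x else Ad i x.

Lemma Re_ip_laplacian S x : complex.Re (ip (laplacian A Ad S x) x) =
  \sum_i nm (laplacian_factor S i x) ^+ 2.
Proof.
rewrite /laplacian (ipDl hH) !(ip_suml hH) raddfD !raddf_sum /= addrC.
rewrite [RHS](bigID (fun i => i \in S)) /=; congr (_ + _); apply: eq_bigr => i iS.
  by rewrite /laplacian_factor iS -(Re_ip_self hH) (is_adjoint_sym hH (A_adj i)).
by rewrite /laplacian_factor (negbTE iS) -(Re_ip_self hH) A_adj.
Qed.

Lemma laplacian_bounded_op S : bounded_op ip (laplacian A Ad S).
Proof.
apply: bounded_op_add => //; apply: bounded_op_sum => // i;
exact: bounded_op_comp.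
Qed.

Lemma koszul_exact_of_bounded_below :
  (forall S, exists2 c, 0 < c &
     forall x, c * nm x ^+ 2 <= \sum_i nm (laplacian_factor S i x) ^+ 2) ->
  koszul_exact A.
Proof.
move=> bdd; have coer S : coercive ip (laplacian A Ad S).
  by have [c c_gt0 c_le] := bdd S; exists c => // x; rewrite Re_ip_laplacian.
have A_lin j := (A_bdd j).1; have Ad_lin j := (Ad_bdd j).1.
apply: koszul_exact_of_laplacian A_lin Ad_lin A_comm AdA_comm _ _ => [S x | S w].
  exact: (coercive_eq0 hH (coer S)).
exact: (coercive_surjective hH (laplacian_bounded_op S) (coer S) w).
Qed.

Lemma approx_null_of_not_koszul_exact : ~ koszul_exact A ->
  exists S (y : nat -> H), (forall m, nm (y m) = 1) /\
    forall i, (fun m => nm (laplacian_factor S i (y m))) @ \oo --> (0 : R).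
Proof.
move=> not_exact; have [S not_bdd] : exists S, ~ exists2 c, 0 < c &
    forall x, c * nm x ^+ 2 <= \sum_i nm (laplacian_factor S i x) ^+ 2.
  by apply/existsNP => bdd; apply/not_exact/koszul_exact_of_bounded_below.
exists S; apply: approx_null_of_not_bounded_below not_bdd => //.
by move=> i; rewrite /laplacian_factor; case: (i \in S); [exact: (A_bdd i).1 | exact: (Ad_bdd i).1].
Qed.

End KoszulLaplacianHilbert.

Unset Implicit Arguments.
Set Strict Implicit.

Theorem theorem2p2 (R : realType) (H : lmodType R[i]) (ip : H -> H -> R[i])
  (n : nat) (T Tadj : 'I_n -> H -> H) (z : 'I_n -> R[i]) :
  is_hilbert_space ip ->
  (forall j, bounded_op ip (T j)) ->
  (forall j, is_adjoint ip (T j) (Tadj j)) ->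
  doubly_commuting T Tadj ->
  (forall j, property1 ip (T j) (Tadj j)) ->
  taylor_spectrum T z ->
  joint_approx_point_spectrum ip Tadj (fun j => conjc (z j)).
Proof.
move=> hH T_bdd T_adj T_dc T_p1 z_sp.
pose A j x := T j x - z j *: x; pose Ad j x := Tadj j x - conjc (z j) *: x.
have T_lin j : linear (T j) := (T_bdd j).1.
have Tadj_lin j : linear (Tadj j) := (adjoint_bounded_op hH (T_bdd j) (T_adj j)).1.
have [S [y [y1 y0]]] : exists S (y : nat -> H), (forall m, ipnorm ip (y m) = 1) /\
    forall i, (fun m => ipnorm ip (laplacian_factor A Ad S i (y m))) @ \oo --> (0 : R).
  apply: approx_null_of_not_koszul_exact z_sp => // [j|j|i j ij x|i j ij x].
  - exact: bounded_op_shift.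
  - exact: is_adjoint_shift.
  - exact: commute_shift (z i) (z j) (T_lin i) (T_lin j) (T_dc i j ij).1 x.
  - exact: commute_shift (conjc (z i)) (z j) (Tadj_lin i) (T_lin j) (T_dc i j ij).2 x.
exists y; split=> // j; have := y0 j; rewrite /laplacian_factor.
by case: (j \in S) => //; exact: T_p1 j (z j) y y1.
Qed.
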